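(* In the coarse-grained calculus $\lambda^{dCG}$ (with flow-insensitive references), for all stores $\Sigma,\Sigma'$, labels $pc,pc'$, environments $\theta$ and values $v$: (i) for every expression $e$, if $\langle\Sigma,pc,e\rangle\Downarrow^{\theta}\langle\Sigma',pc',v\rangle$ (forcing semantics) then $pc\sqsubseteq pc'$; (ii) for every thunk $t$, if $\langle\Sigma,pc,t\rangle\Downarrow^{\theta}\langle\Sigma',pc',v\rangle$ (thunk semantics) then $pc\sqsubseteq pc'$.
   Context: Fix a lattice $(\mathcal{L},\sqsubseteq,\sqcup)$ of labels. $\lambda^{dCG}$ has values $v::=()\mid(x.e,\theta)\mid\mathbf{inl}(v)\mid\mathbf{inr}(v)\mid(v_1,v_2)\mid\ell\mid\mathbf{Labeled}\,\ell\,v\mid(t,\theta)\mid n_\ell$, expressions $e::=x\mid\lambda x.e\mid e_1\,e_2\mid()\mid\ell\mid(e_1,e_2)\mid\mathbf{fst}(e)\mid\mathbf{snd}(e)\mid\mathbf{inl}(e)\mid\mathbf{inr}(e)\mid\mathbf{case}(e,x.e_1,x.e_2)\mid e_1\sqsubseteq^{?}e_2\mid t$, thunks $t::=\mathbf{return}(e)\mid\mathbf{bind}(e,x.e)\mid\mathbf{unlabel}(e)\mid\mathbf{toLabeled}(e)\mid\mathbf{labelOf}(e)\mid\mathbf{getLabel}\mid\mathbf{taint}(e)\mid\mathbf{new}(e)\mid\,!e\mid e_1:=e_2\mid\mathbf{labelOfRef}(e)$; environments are finite maps from variables to values; a store maps each label to a finite list of values ($|M|$, $M[n]$, $M[n\mapsto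 v]$: length, $n$-th entry, replacement/append). Pure semantics $e\Downarrow^\theta v$: standard call-by-value environment semantics ($x\Downarrow\theta(x)$, $\lambda x.e\Downarrow(x.e,\theta)$, thunk $t\Downarrow(t,\theta)$, application of function closures $e_1e_2$: $e_1\Downarrow(x.e,\theta')$, $e_2\Downarrow v_2$, $e\Downarrow^{\theta'[x\mapsto v_2]}v$; componentwise pairs, projections, injections; case on injections binding $x$; $e_1\sqsubseteq^?e_2$ yields $\mathbf{inl}(())$ if the labels satisfy $\ell_1\sqsubseteq\ell_2$ else $\mathbf{inr}(())$). Forcing semantics: $\langle\Sigma,pc,e\rangle\Downarrow^\theta\langle\Sigma',pc',v\rangle$ iff $e\Downarrow^\theta(t,\theta')$ and $\langle\Sigma,pc,t\rangle\Downarrow^{\theta'}\langle\Sigma',pc',v\rangle$. Thunk semantics (store unchanged unless stated): $\mathbf{return}(e)$ gives $\langle\Sigma,pc,v\rangle$ if $e\Downarrow^\theta v$; $\mathbf{bind}(e_1,x.e_2)$: forcing $e_1$ gives $\langle\Sigma',pc',v_1\rangle$ and forcing $e_2$ in $\theta[x\mapsto v_1]$ from $\langle\Sigma',pc'\rangle$ gives the result; $\mathbf{toLabeled}(e)$: forcing $e$ gives $\langle\Sigma',pc',v\rangle$, result $\langle\Sigma',pc,\mathbf{Labeled}\,pc'\,v\rangle$; $\mathbf{unlabel}(e)$ with $e\Downarrow\mathbf{Labeled}\,\ell\,v$: $\langle\Sigma,pc\sqcup\ell,v\rangle$; $\mathbf{labelOf}(e)$ with $e\Downarrow\mathbf{Labeled}\,\ell\,v$: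 $\langle\Sigma,pc\sqcup\ell,\ell\rangle$; $\mathbf{getLabel}$: $\langle\Sigma,pc,pc\rangle$; $\mathbf{taint}(e)$ with $e\Downarrow\ell$: $\langle\Sigma,pc\sqcup\ell,()\rangle$; $\mathbf{new}(e)$ with $e\Downarrow\mathbf{Labeled}\,\ell\,v$, $pc\sqsubseteq\ell$, $n=|\Sigma(\ell)|$: $\langle\Sigma[\ell\mapsto\Sigma(\ell)[n\mapsto v]],pc,n_\ell\rangle$; $!e$ with $e\Downarrow n_\ell$, $\Sigma(\ell)[n]=v$: $\langle\Sigma,pc\sqcup\ell,v\rangle$; $e_1:=e_2$ with $e_1\Downarrow n_{\ell_1}$, $e_2\Downarrow\mathbf{Labeled}\,\ell_2\,v$, $\ell_2\sqsubseteq\ell_1$, $pc\sqsubseteq\ell_1$: $\langle\Sigma[\ell_1\mapsto\Sigma(\ell_1)[n\mapsto v]],pc,()\rangle$; $\mathbf{labelOfRef}(e)$ with $e\Downarrow n_\ell$: $\langle\Sigma,pc\sqcup\ell,\ell\rangle$. *)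

From HB Require Import structures.
From mathcomp Require Import all_boot all_order.
Set Implicit Arguments. Unset Strict Implicit. Unset Printing Implicit Defensive.
Import Order.TTheory.
Local Open Scope order_scope.

Definition var := nat.

Section DCG.
Context {d : Order.disp_t} (L : latticeType d).

Inductive value : Type :=
  | VUnit : value
  | VClos : var -> expr -> list (var * value) -> value
  | VInl : value -> value
  | VInr : value -> value
  | VPair : value -> value -> value
  | VLab : L -> value
  | VLabeled : L -> value -> value
  | VThunk : thunk -> list (var * value) -> value
  | VRef : nat -> L -> value
with expr : Type :=
  | EVar : var -> expr
  | ELam : var -> expr -> expr
  | EApp : expr -> expr -> expr
  | EUnit : expr
  | ELab : L -> expr
  | EPair : expr -> expr -> expr
  | EFst : expr -> expr
  | ESnd : expr -> expr
  | EInl : expr -> expr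
  | EInr : expr -> expr
  | ECase : expr -> var -> expr -> var -> expr -> expr
  | ELe : expr -> expr -> expr
  | EThunk : thunk -> expr
with thunk : Type :=
  | TReturn : expr -> thunk
  | TBind : expr -> var -> expr -> thunk
  | TUnlabel : expr -> thunk
  | TToLabeled : expr -> thunk
  | TLabelOf : expr -> thunk
  | TGetLabel : thunk
  | TTaint : expr -> thunk
  | TNew : expr -> thunk
  | TDeref : expr -> thunk
  | TAssign : expr -> expr -> thunk
  | TLabelOfRef : expr -> thunk.

(* environments: finite maps from variables to values, as association lists;
   theta[x |-> v] is (x, v) :: theta *)
Definition env := list (var * value).

Fixpoint lookup (th : env) (x : var) : option value :=
  match th with
  | nil => None
  | cons (y, v) th' => if x == y then Some v else lookup th' x
  end.

Definition store := L -> seq value.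

(* M[n |-> v]: replacement if n < |M|, append if n = |M| *)
Definition mem_write (M : seq value) (n : nat) (v : value) : seq value :=
  set_nth v M n v.

Definition store_write (S : store) (l : L) (n : nat) (v : value) : store :=
  fun l' => if l' == l then mem_write (S l) n v else S l'.

Inductive eval : env -> expr -> value -> Prop :=
  | ev_var th x v : lookup th x = Some v -> eval th (EVar x) v
  | ev_lam th x e : eval th (ELam x e) (VClos x e th)
  | ev_thunk th t : eval th (EThunk t) (VThunk t th)
  | ev_app th e1 e2 x e th' v2 v :
      eval th e1 (VClos x e th') -> eval th e2 v2 ->
      eval ((x, v2) :: th') e v -> eval th (EApp e1 e2) v
  | ev_unit th : eval th EUnit VUnit
  | ev_lab th l : eval th (ELab l) (VLab l)
  | ev_pair th e1 e2 v1 v2 :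
      eval th e1 v1 -> eval th e2 v2 -> eval th (EPair e1 e2) (VPair v1 v2)
  | ev_fst th e v1 v2 : eval th e (VPair v1 v2) -> eval th (EFst e) v1
  | ev_snd th e v1 v2 : eval th e (VPair v1 v2) -> eval th (ESnd e) v2
  | ev_inl th e v : eval th e v -> eval th (EInl e) (VInl v)
  | ev_inr th e v : eval th e v -> eval th (EInr e) (VInr v)
  | ev_case_inl th e x1 e1 x2 e2 v v' :
      eval th e (VInl v) -> eval ((x1, v) :: th) e1 v' ->
      eval th (ECase e x1 e1 x2 e2) v'
  | ev_case_inr th e x1 e1 x2 e2 v v' :
      eval th e (VInr v) -> eval ((x2, v) :: th) e2 v' ->
      eval th (ECase e x1 e1 x2 e2) v'
  | ev_le_true th e1 e2 l1 l2 :
      eval th e1 (VLab l1) -> eval th e2 (VLab l2) -> l1 <= l2 ->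
      eval th (ELe e1 e2) (VInl VUnit)
  | ev_le_false th e1 e2 l1 l2 :
      eval th e1 (VLab l1) -> eval th e2 (VLab l2) -> ~~ (l1 <= l2) ->
      eval th (ELe e1 e2) (VInr VUnit).

Inductive force : store -> L -> env -> expr -> store -> L -> value -> Prop :=
  | force_intro S pc th e t th' S' pc' v :
      eval th e (VThunk t th') -> tsem S pc th' t S' pc' v ->
      force S pc th e S' pc' v
with tsem : store -> L -> env -> thunk -> store -> L -> value -> Prop :=
  | ts_return S pc th e v :
      eval th e v -> tsem S pc th (TReturn e) S pc v
  | ts_bind S pc th e1 x e2 S1 pc1 v1 S2 pc2 v :
      force S pc th e1 S1 pc1 v1 ->
      force S1 pc1 ((x, v1) :: th) e2 S2 pc2 v ->
      tsem S pc th (TBind e1 x e2) S2 pc2 v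
  | ts_toLabeled S pc th e S' pc' v :
      force S pc th e S' pc' v ->
      tsem S pc th (TToLabeled e) S' pc (VLabeled pc' v)
  | ts_unlabel S pc th e l v :
      eval th e (VLabeled l v) ->
      tsem S pc th (TUnlabel e) S (Order.join pc l) v
  | ts_labelOf S pc th e l v :
      eval th e (VLabeled l v) ->
      tsem S pc th (TLabelOf e) S (Order.join pc l) (VLab l)
  | ts_getLabel S pc th :
      tsem S pc th TGetLabel S pc (VLab pc)
  | ts_taint S pc th e l :
      eval th e (VLab l) ->
      tsem S pc th (TTaint e) S (Order.join pc l) VUnit
  | ts_new S pc th e l v n :
      eval th e (VLabeled l v) -> pc <= l -> n = size (S l) ->
      tsem S pc th (TNew e) (store_write S l n v) pc (VRef n l)
  | ts_deref S pc th e n l v :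
      eval th e (VRef n l) -> onth (S l) n = Some v ->
      tsem S pc th (TDeref e) S (Order.join pc l) v
  | ts_assign S pc th e1 e2 n l1 l2 v :
      eval th e1 (VRef n l1) -> eval th e2 (VLabeled l2 v) ->
      l2 <= l1 -> pc <= l1 ->
      tsem S pc th (TAssign e1 e2) (store_write S l1 n v) pc VUnit
  | ts_labelOfRef S pc th e n l :
      eval th e (VRef n l) ->
      tsem S pc th (TLabelOfRef e) S (Order.join pc l) (VLab l).

End DCG.

From mathcomp Require Import all_boot all_order.
Import Order.TTheory.

Scheme force_mut_ind := Induction for force Sort Prop
with tsem_mut_ind := Induction for tsem Sort Prop.
Combined Scheme force_tsem_ind from force_mut_ind, tsem_mut_ind.

Section PcMonotonicity.
Context {d : Order.disp_t} (L : latticeType d).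
Local Open Scope order_scope.

Lemma force_tsem_pc_le :
  (forall S pc th e S' pc' v, @force d L S pc th e S' pc' v -> pc <= pc') /\
  (forall S pc th t S' pc' v, @tsem d L S pc th t S' pc' v -> pc <= pc').
Proof.
apply: force_tsem_ind => //=; try by move=> *; rewrite ?lexx ?leUl.
by move=> S pc th e1 x e2 S1 pc1 v1 S2 pc2 v _ le_pc_pc1 _ le_pc1_pc2;
  exact: le_trans le_pc_pc1 le_pc1_pc2.
Qed.

Lemma force_pc_le S pc th e S' pc' v :
  @force d L S pc th e S' pc' v -> pc <= pc'.
Proof. exact: force_tsem_pc_le.1. Qed.

Lemma tsem_pc_le S pc th t S' pc' v :
  @tsem d L S pc th t S' pc' v -> pc <= pc'.
Proof. exact: force_tsem_pc_le.2. Qed.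

End PcMonotonicity.

Theorem mainTheorem8 (d : Order.disp_t) (L : latticeType d)
    (S S' : store L) (pc pc' : L) (th : env L) (v : value L) :
  (forall e : expr L, force S pc th e S' pc' v -> (pc <= pc')%O) /\
  (forall t : thunk L, tsem S pc th t S' pc' v -> (pc <= pc')%O).
Proof. by split=> ?; [apply: force_pc_le | apply: tsem_pc_le]. Qed.
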